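(* Let $\gamma>0$, let $V\in C_{p,\gamma}^{0}(\mathbb{R})$ be real-valued, and $\lambda\in\mathbb{R}$. Suppose $\psi(x)=e^{\mathrm{i}kx}p(x)$, with $k\in\mathbb{C}$ and $p\in C^2_{p,\gamma}(\mathbb{R})$, is a bounded Bloch solution of $-\psi''+V\psi=\lambda\psi$ that has a zero. Then the quasimomentum is $k=\frac{n\pi}{\gamma}$ for some $n\in\mathbb{Z}$, and $\psi$ equals the product of a complex constant and a real-valued function $f$ that is $\gamma$-periodic or $\gamma$-anti-periodic ($f(x+\gamma)=f(x)$ for all $x$, or $f(x+\gamma)=-f(x)$ for all $x$).
   Context: $C_{p}^{0}(I)$: integrable piecewise-continuous functions on $I$ (finitely many discontinuities on each finite subinterval, one-sided improper integrals of $|f|$ converging at each discontinuity); $C_{p}^{l}(I)$: differentiable functions with derivative in $C_{p}^{l-1}(I)$; $C_{p,\gamma}^{l}(\mathbb{R})$: $\gamma$-periodic functions in $C_{p}^{l}(\mathbb{R})$. A Bloch solution is a solution of the form $e^{\mathrm{i}kx}p(x)$ with $p$ $\gamma$-periodic; $k$ is its quasimomentum. *)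

From Stdlib Require Import Reals List.
From Coquelicot Require Import Coquelicot.
Open Scope R_scope.

Definition cexp (z : C) : C :=
  (exp (Re z) * cos (Im z), exp (Re z) * sin (Im z)).

Definition periodic {T : Type} (gamma : R) (f : R -> T) : Prop :=
  forall x, f (x + gamma) = f x.

(* C_p^0(R) for complex-valued functions: finitely many discontinuities on
   each finite interval; at every discontinuity d the one-sided improper
   integrals of |f| converge. *)
Definition PC0 (f : R -> C) : Prop :=
  (forall a b : R, exists D : list R,
      forall x, a <= x <= b -> ~ In x D -> continuous f x) /\
  (forall d : R, ~ continuous f d ->
     exists delta : R, 0 < delta /\
       (forall t, d < t <= d + delta -> continuous f t) /\
       (forall t, d - delta <= t < d -> continuous f t) /\
       (exists l1 : R, filterlim (fun t => RInt (fun s => Cmod (f s)) t (d + delta))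
                          (at_right d) (locally l1)) /\
       (exists l2 : R, filterlim (fun t => RInt (fun s => Cmod (f s)) (d - delta) t)
                          (at_left d) (locally l2))).

(* C_p^l(R): (continuous) functions differentiable except at finitely many
   points of each finite interval, with derivative in C_p^{l-1}(R). *)
Fixpoint PC (l : nat) (f : R -> C) : Prop :=
  match l with
  | O => PC0 f
  | S l' =>
      (forall x, continuous f x) /\
      exists g : R -> C, PC l' g /\
        forall a b : R, exists D : list R,
          forall x, a <= x <= b -> ~ In x D -> is_derive f x (g x)
  end.

Definition PCper (l : nat) (gamma : R) (f : R -> C) : Prop :=
  PC l f /\ periodic gamma f.

(* psi solves -psi'' + V psi = lambda psi: psi is differentiable and psi'
   is differentiable with the equation holding, except at finitely many
   points of each finite interval (where V may be discontinuous). *)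
Definition is_solution (V : R -> R) (lambda : R) (psi : R -> C) : Prop :=
  exists psi1 : R -> C,
    (forall x, is_derive psi x (psi1 x)) /\
    forall a b : R, exists D : list R,
      forall x, a <= x <= b -> ~ In x D ->
        exists psi2 : C, is_derive psi1 x psi2 /\
          (- psi2 + RtoC (V x) * psi x = RtoC lambda * psi x)%C.

From Stdlib Require Import Reals ZArith Lra List Classical.
From Coquelicot Require Import Coquelicot.
Open Scope R_scope.

(* Let mu = e^{ik gamma}, so that psi (x + gamma) = mu psi x, and let u, v be the
   real and imaginary parts of psi; as V and lambda are real, both solve the
   equation. Boundedness and psi <> 0 force |mu| = 1. At a zero x0 of psi put
   c = psi'(x0); it is nonzero, since otherwise psi would vanish on [x0, +oo)
   while |psi| is periodic and not identically zero. The real solution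
   Im (conj c * psi) vanishes at x0 together with its derivative, so by
   uniqueness for the Cauchy problem psi is a real multiple of c on [x0, +oo).
   Comparing psi (y + gamma) and psi y at a point y >= x0 where psi y <> 0
   shows that mu is real, hence mu = 1 or -1; this gives k = n pi / gamma
   and, shifting back, psi = c f with f (x + gamma) = mu f x.
   Uniqueness follows from a Gronwall-type estimate near each point, which only
   needs |V| to be (improperly) integrable on a right neighbourhood, and a
   continuity argument along [x0, +oo). *)

(** * Derivatives off finite sets *)

Lemma is_derive_Re (f : R -> C) (x : R) (l : C) :
  is_derive f x l -> is_derive (fun t => Re (f t)) x (Re l).
Proof.
  intro H; apply (filterdiff_comp f fst _ fst H), filterdiff_linear, is_linear_fst.
Qed.

Lemma is_derive_Im (f : R -> C) (x : R) (l : C) :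
  is_derive f x l -> is_derive (fun t => Im (f t)) x (Im l).
Proof.
  intro H; apply (filterdiff_comp f snd _ snd H), filterdiff_linear, is_linear_snd.
Qed.

Lemma continuous_Re (f : R -> C) (x : R) : continuous f x -> continuous (fun t => Re (f t)) x.
Proof. intro H; apply (continuous_comp f fst _ H), continuous_fst. Qed.

Lemma continuous_Im (f : R -> C) (x : R) : continuous f x -> continuous (fun t => Im (f t)) x.
Proof. intro H; apply (continuous_comp f snd _ H), continuous_snd. Qed.

Lemma continuous_of_is_derive (f : R -> R) (x l : R) :
  is_derive f x l -> continuous f x.
Proof.
  intro H; apply (ex_derive_continuous (K := R_AbsRing) (V := R_NormedModule)).
  exists l; exact H.
Qed.

Lemma le_of_derive_nonpos (h : R -> R) (a c : R) :
  a <= c ->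
  (forall x, a <= x <= c -> continuous h x) ->
  (forall x, a < x < c -> exists dh, is_derive h x dh /\ dh <= 0) ->
  h c <= h a.
Proof.
  intros Hac Hcont Hder.
  (* [MVT_gen] may return an endpoint, so the derivative is extended by 0 there. *)
  set (dh := fun x => if Rlt_dec a x then if Rlt_dec x c then Derive h x else 0 else 0).
  assert (Hdh : forall x, (a < x < c -> is_derive h x (dh x)) /\ dh x <= 0).
  { intros x; unfold dh.
    destruct (Rlt_dec a x) as [Hax|]; [|lra]; destruct (Rlt_dec x c) as [Hxc|]; [|lra].
    destruct (Hder x (conj Hax Hxc)) as [d [Hd Hd0]].
    rewrite (is_derive_unique _ _ _ Hd); auto. }
  destruct (MVT_gen h a c dh) as [t [_ Ht]].
  - rewrite Rmin_left, Rmax_right by lra. intros x Hx; apply Hdh, Hx.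
  - rewrite Rmin_left, Rmax_right by lra.
    intros x Hx; apply continuity_pt_filterlim, Hcont, Hx.
  - assert (dh t <= 0) by apply Hdh. nra.
Qed.

Lemma le_of_derive_nonpos_except (h : R -> R) (D : list R) (a c : R) :
  a <= c ->
  (forall x, a <= x <= c -> continuous h x) ->
  (forall x, a < x < c -> ~ In x D -> exists dh, is_derive h x dh /\ dh <= 0) ->
  h c <= h a.
Proof.
  revert a c; induction D as [|d D IH]; intros a c Hac Hcont Hder.
  - apply le_of_derive_nonpos; auto.
  - assert (Hsub : forall a' c', a <= a' -> c' <= c -> a' <= c' ->
                     (a' < d < c' -> False) -> h c' <= h a').
    { intros a' c' Ha' Hc' Hac' Hd. apply IH; auto.
      - intros x Hx; apply Hcont; lra.
      - intros x Hx Hn; apply Hder; [lra|].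
        intros [E|E]; [subst; lra | contradiction]. }
    destruct (Rlt_dec a d); [destruct (Rlt_dec d c)|].
    + apply Rle_trans with (h d); apply Hsub; lra.
    + apply Hsub; lra.
    + apply Hsub; lra.
Qed.

Lemma abs_increment_le_except (f g : R -> R) (D : list R) (a c : R) :
  a <= c ->
  (forall x, a <= x <= c -> continuous f x /\ continuous g x) ->
  (forall x, a < x < c -> ~ In x D ->
     exists df dg, is_derive f x df /\ is_derive g x dg /\ Rabs df <= dg) ->
  Rabs (f c - f a) <= g c - g a.
Proof.
  intros Hac Hcont Hder.
  assert (Hsign : forall s, Rabs s = 1 -> s * (f c - f a) <= g c - g a).
  { intros s Hs.
    assert (H := le_of_derive_nonpos_except (fun x => s * f x - g x) D a c Hac).
    cbv beta in H. enough (s * f c - g c <= s * f a - g a) by lra.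
    apply H.
    - intros x Hx; destruct (Hcont x Hx).
      apply (continuous_minus (fun x => s * f x) g); auto.
      apply (continuous_scal_r s f); auto.
    - intros x Hx Hn; destruct (Hder x Hx Hn) as [df [dg [Hf [Hg Hle]]]].
      exists (s * df - dg); split.
      + apply (is_derive_minus (fun x => s * f x) g); auto.
        apply is_derive_scal; auto.
      + assert (s * df <= Rabs s * Rabs df) by (rewrite <- Rabs_mult; apply Rle_abs).
        nra. }
  unfold Rabs at 1; destruct (Rcase_abs (f c - f a)).
  - assert (H := Hsign (-1) ltac:(rewrite Rabs_left; lra)); lra.
  - assert (H := Hsign 1 Rabs_R1); lra.
Qed.

Lemma eq_of_derive_0_except (Q : R -> R) :
  (forall x, continuous Q x) ->
  (forall a c, exists D, forall x, a <= x <= c -> ~ In x D -> is_derive Q x 0) ->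
  forall s t, Q s = Q t.
Proof.
  intros HQ HD.
  assert (Hle : forall a c, a <= c -> Q c = Q a).
  { intros a c Hac; destruct (HD a c) as [D HDD].
    assert (H : Rabs (Q c - Q a) <= 0 - 0).
    { apply (abs_increment_le_except Q (fun _ => 0) D a c Hac).
      - intros x _; split; [apply HQ | apply continuous_const].
      - intros x Hx Hn; exists 0, 0; split; [|split].
        + apply HDD; auto; lra.
        + apply (is_derive_const (K := R_AbsRing) (V := R_NormedModule)).
        + rewrite Rabs_R0; lra. }
    pose proof (Rabs_pos (Q c - Q a)).
    destruct (Req_dec (Q c - Q a) 0) as [E|E]; [lra|].
    pose proof (Rabs_pos_lt _ E); lra. }
  intros s t; destruct (Rle_dec s t).
  - symmetry; apply Hle; auto.
  - apply Hle; lra.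
Qed.

Lemma ex_RInt_closed (f : R -> R) (a c : R) :
  a <= c -> (forall y, a <= y <= c -> continuous f y) -> ex_RInt f a c.
Proof.
  intros Hac Hf; apply (ex_RInt_continuous (V := R_CompleteNormedModule)).
  rewrite Rmin_left, Rmax_right by lra; exact Hf.
Qed.

Lemma ex_RInt_on (f : R -> R) (l r a c : R) :
  (forall y, l < y < r -> continuous f y) -> l < a < r -> l < c < r ->
  ex_RInt f a c.
Proof.
  intros Hf Ha Hc; destruct (Rle_dec a c).
  - apply ex_RInt_closed; auto; intros y Hy; apply Hf; lra.
  - apply (ex_RInt_swap (V := R_CompleteNormedModule)), ex_RInt_closed; [lra|].
    intros y Hy; apply Hf; lra.
Qed.

Lemma is_derive_RInt_on (f : R -> R) (l r a x : R) :
  (forall y, l < y < r -> continuous f y) -> l < a < r -> l < x < r ->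
  is_derive (fun y => RInt f a y) x (f x).
Proof.
  intros Hf Ha Hx; apply (is_derive_RInt f _ a x); [|apply Hf; lra].
  assert (Hd : 0 < Rmin (x - l) (r - x)) by (apply Rmin_glb_lt; lra).
  exists (mkposreal _ Hd); intros y Hy.
  change (Rabs (y - x) < Rmin (x - l) (r - x)) in Hy.
  pose proof (Rmin_l (x - l) (r - x)); pose proof (Rmin_r (x - l) (r - x)).
  apply Rabs_def2 in Hy.
  apply (RInt_correct (V := R_CompleteNormedModule)), (ex_RInt_on f l r); auto; lra.
Qed.

Lemma is_derive_RInt_continuous (f : R -> R) (a x : R) :
  (forall y, continuous f y) -> is_derive (fun y => RInt f a y) x (f x).
Proof.
  intros Hf; apply (is_derive_RInt_on f (Rmin a x - 1) (Rmax a x + 1)); auto.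
  - pose proof (Rmin_l a x); pose proof (Rmax_l a x); lra.
  - pose proof (Rmin_r a x); pose proof (Rmax_r a x); lra.
Qed.

(* P minus a primitive of G has derivative 0 off finite sets, hence is constant. *)
Lemma is_derive_of_except (P G : R -> R) :
  (forall x, continuous P x) -> (forall x, continuous G x) ->
  (forall a c, exists D, forall x, a <= x <= c -> ~ In x D -> is_derive P x (G x)) ->
  forall x, is_derive P x (G x).
Proof.
  intros HP HG HD x0.
  set (Q := fun t => P t - RInt G x0 t).
  assert (HQ : forall t, Q t = Q x0).
  { intro t; apply eq_of_derive_0_except.
    - intro x; apply (continuous_minus P (fun t => RInt G x0 t)); [apply HP|].
      eapply continuous_of_is_derive; apply is_derive_RInt_continuous, HG.
    - intros a c; destruct (HD a c) as [D HDD]; exists D; intros x Hx Hn.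
      replace 0 with (G x - G x) by ring.
      apply (is_derive_minus P (fun t => RInt G x0 t)); auto.
      apply is_derive_RInt_continuous, HG. }
  apply (is_derive_ext (fun t => Q x0 + RInt G x0 t)).
  { intro t; rewrite <- (HQ t); unfold Q; lra. }
  replace (G x0) with (0 + G x0) by ring.
  apply (is_derive_plus (fun _ => Q x0) (fun t => RInt G x0 t)).
  - apply (is_derive_const (K := R_AbsRing) (V := R_NormedModule)).
  - apply is_derive_RInt_continuous, HG.
Qed.

(** * Uniqueness for the Cauchy problem *)

Lemma nonneg_of_continuous_approx (g : R -> R) (x : R) :
  continuous g x ->
  (forall d, 0 < d -> exists t, Rabs (t - x) < d /\ 0 <= g t) ->
  0 <= g x.
Proof.
  intros Hg Happ; apply Rnot_lt_le; intro Hneg.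
  apply continuity_pt_filterlim in Hg.
  destruct (proj1 (continuity_pt_locally g x) Hg (mkposreal (- g x) ltac:(lra))) as [d Hd].
  destruct (Happ d (cond_pos d)) as [t [Ht Hgt]].
  specialize (Hd t Ht); simpl in Hd; apply Rabs_def2 in Hd; lra.
Qed.

Lemma eq_0_of_continuous_left (f : R -> R) (z m : R) :
  z < m -> continuous f m -> (forall r, z <= r < m -> f r = 0) -> f m = 0.
Proof.
  intros Hzm Hf Hzero.
  enough (0 <= - Rabs (f m)) by (pose proof (Rabs_pos (f m));
    destruct (Req_dec (f m) 0) as [|E]; [|pose proof (Rabs_pos_lt _ E)]; lra).
  apply (nonneg_of_continuous_approx (fun t => - Rabs (f t))).
  - apply (continuous_opp (fun t => Rabs (f t))), continuous_Rabs_comp, Hf.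
  - intros d Hd; exists (Rmax z (m - d / 2)); split.
    + pose proof (Rmax_l z (m - d / 2)); pose proof (Rmax_r z (m - d / 2)).
      assert (Rmax z (m - d / 2) < m) by (apply Rmax_case; lra).
      rewrite Rabs_left; lra.
    + rewrite Hzero; [rewrite Rabs_R0; lra|].
      split; [apply Rmax_l | apply Rmax_case; lra].
Qed.

Lemma right_induction (P : R -> Prop) (z : R) :
  P z ->
  (forall m, z < m -> (forall r, z <= r < m -> P r) -> P m) ->
  (forall x, z <= x -> P x -> exists eps, 0 < eps /\ forall s, x <= s <= x + eps -> P s) ->
  forall T, z <= T -> P T.
Proof.
  intros Hz Hclosed Hopen T HT.
  destruct (classic (forall r, z <= r <= T -> P r)) as [Hall|Hnot]; [apply Hall; lra|].
  exfalso.
  set (E := fun t => z <= t <= T /\ forall r, z <= r <= t -> P r).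
  assert (Ez : E z) by (split; [lra|]; intros r Hr; replace r with z by lra; auto).
  destruct (completeness E) as [m [Hub Hlub]];
    [exists T; intros t [Ht _]; lra | exists z; exact Ez|].
  assert (Hzm : z <= m) by (apply Hub, Ez).
  assert (Hbelow : forall r, z <= r < m -> P r).
  { intros r Hr; destruct (classic (exists t, E t /\ r < t)) as [[t [[_ Ht] Hrt]]|Hn].
    - apply Ht; lra.
    - assert (m <= r); [|lra].
      apply Hlub; intros t Et; apply Rnot_lt_le; intro Hrt; apply Hn; eauto. }
  assert (Hm : P m).
  { destruct (Req_dec z m) as [<-|]; [auto | apply Hclosed; auto; lra]. }
  destruct (Hopen m Hzm Hm) as [eps [Heps Hloc]].
  assert (Ht : forall r, z <= r <= Rmin (m + eps) T -> P r).
  { intros r Hr; pose proof (Rmin_l (m + eps) T).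
    destruct (Rlt_dec r m); [apply Hbelow | apply Hloc]; lra. }
  destruct (Rle_dec (m + eps) T).
  - rewrite Rmin_left in Ht by lra.
    assert (m + eps <= m) by (apply Hub; split; auto; lra). lra.
  - rewrite Rmin_right in Ht by lra. apply Hnot, Ht.
Qed.

Lemma exists_gap_right (D : list R) (z : R) :
  exists d, 0 < d /\ forall x, z < x < z + d -> ~ In x D.
Proof.
  induction D as [|a D [d [Hd HD]]].
  - exists 1; split; [lra | intros x _ []].
  - destruct (Rle_dec a z).
    + exists d; split; auto; intros x Hx [E|E]; [lra | apply (HD x Hx E)].
    + exists (Rmin d (a - z)); split; [apply Rmin_glb_lt; lra|].
      pose proof (Rmin_l d (a - z)); pose proof (Rmin_r d (a - z)).
      intros x Hx [E|E]; [lra | apply (HD x); [lra | exact E]].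
Qed.

Definition right_integrable (V : R -> R) (z : R) : Prop :=
  exists delta L, 0 < delta /\
    (forall x, z < x < z + delta -> continuous V x) /\
    (forall t s, z < t <= s -> s < z + delta -> RInt (fun u => Rabs (V u)) t s <= L).

Lemma right_integrable_of_continuous (V : R -> R) (z : R) :
  PC0 (fun x => RtoC (V x)) -> continuous V z -> right_integrable V z.
Proof.
  intros [Hfin _] HVz.
  destruct (Hfin z (z + 1)) as [D HD]; destruct (exists_gap_right D z) as [d0 [Hd0 Hgap]].
  apply continuity_pt_filterlim in HVz.
  destruct (proj1 (continuity_pt_locally V z) HVz (mkposreal 1 Rlt_0_1)) as [d1 Hd1].
  simpl in Hd1.
  pose proof (cond_pos d1).
  set (delta := Rmin 1 (Rmin d0 d1)).
  assert (Hdelta : 0 < delta) by (repeat apply Rmin_glb_lt; lra).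
  assert (Hle : delta <= 1 /\ delta <= d0 /\ delta <= d1).
  { unfold delta; pose proof (Rmin_l 1 (Rmin d0 d1)); pose proof (Rmin_r 1 (Rmin d0 d1)).
    pose proof (Rmin_l d0 d1); pose proof (Rmin_r d0 d1); lra. }
  assert (HV : forall x, z < x < z + delta -> continuous V x).
  { intros x Hx; apply (continuous_Re (fun y => RtoC (V y))), HD; [lra | apply Hgap; lra]. }
  exists delta, ((Rabs (V z) + 1) * delta); split; [exact Hdelta | split; [exact HV|]].
  intros t s Hts Hs.
  assert (Hint : RInt (fun u => Rabs (V u)) t s <= RInt (fun _ => Rabs (V z) + 1) t s).
  { apply RInt_le; [lra | | apply ex_RInt_const |].
    - apply (ex_RInt_on _ z (z + delta)); try lra.
      intros y Hy; apply continuous_Rabs_comp, HV, Hy.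
    - intros x Hx; assert (Hb : Rabs (V x - V z) < 1)
        by (apply Hd1; change (Rabs (x - z) < d1); rewrite Rabs_right; lra).
      pose proof (Rabs_triang_inv (V x) (V z)); lra. }
  rewrite RInt_const in Hint.
  change (scal (s - t) (Rabs (V z) + 1)) with ((s - t) * (Rabs (V z) + 1)) in Hint.
  pose proof (Rabs_pos (V z)); nra.
Qed.

Lemma right_integrable_of_singular (V : R -> R) (z dl l1 : R) :
  0 < dl ->
  (forall t, z < t <= z + dl -> continuous V t) ->
  filterlim (fun t => RInt (fun u => Rabs (V u)) t (z + dl)) (at_right z) (locally l1) ->
  right_integrable V z.
Proof.
  intros Hdl HV Hlim.
  destruct (proj1 (filterlim_locally _ l1) Hlim (mkposreal 1 Rlt_0_1)) as [eta Heta].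
  pose proof (cond_pos eta); pose proof (Rmin_l eta dl); pose proof (Rmin_r eta dl).
  exists (Rmin eta dl), (l1 + 1); split; [apply Rmin_glb_lt; auto | split].
  { intros x Hx; apply HV; lra. }
  intros t s Hts Hs.
  assert (Hex : forall a c, z < a -> a <= c -> c <= z + dl ->
                  ex_RInt (fun u => Rabs (V u)) a c).
  { intros a c Ha Hac Hc; apply ex_RInt_closed; auto.
    intros y Hy; apply continuous_Rabs_comp, HV; lra. }
  assert (Htail : RInt (fun u => Rabs (V u)) t (z + dl) < l1 + 1).
  { assert (Hball : ball z eta t) by (change (Rabs (t - z) < eta); rewrite Rabs_right; lra).
    specialize (Heta t Hball ltac:(lra)).
    change (Rabs (RInt (fun u => Rabs (V u)) t (z + dl) - l1) < 1) in Heta.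
    apply Rabs_def2 in Heta; lra. }
  assert (Hchasles := RInt_Chasles (fun u => Rabs (V u)) t s (z + dl)
                        (Hex t s ltac:(lra) ltac:(lra) ltac:(lra))
                        (Hex s (z + dl) ltac:(lra) ltac:(lra) ltac:(lra))).
  assert (0 <= RInt (fun u => Rabs (V u)) s (z + dl)).
  { apply RInt_ge_0; [lra | apply Hex; lra | intros; apply Rabs_pos]. }
  change plus with Rplus in Hchasles; simpl in Hchasles; lra.
Qed.

Lemma PC0_right_integrable (V : R -> R) (z : R) :
  PC0 (fun x => RtoC (V x)) -> right_integrable V z.
Proof.
  intros HPC; destruct (classic (continuous (fun x => RtoC (V x)) z)) as [Hc|Hc].
  - apply right_integrable_of_continuous; auto; apply (continuous_Re (fun y => RtoC (V y))), Hc.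
  - destruct (proj2 HPC z Hc) as [dl [Hdl [Hr [_ [[l1 Hl1] _]]]]].
    apply (right_integrable_of_singular V z dl l1 Hdl).
    + intros t Ht; apply (continuous_Re (fun y => RtoC (V y))), Hr; lra.
    + eapply filterlim_ext; [|exact Hl1]; intro t; apply RInt_ext; intros; apply Cmod_R.
Qed.

Record real_solution (V : R -> R) (lam : R) (b b1 : R -> R) : Prop := {
  real_solution_derive : forall x, is_derive b x (b1 x);
  real_solution_continuous : forall x, continuous b1 x;
  real_solution_ode : forall a c, exists D, forall x, a <= x <= c -> ~ In x D ->
    is_derive b1 x ((V x - lam) * b x) }.

Arguments real_solution_derive {V lam b b1}.
Arguments real_solution_continuous {V lam b b1}.
Arguments real_solution_ode {V lam b b1}.

Lemma exists_small_step (delta C : R) :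
  0 < delta -> 0 <= C -> exists eps, 0 < eps < delta /\ eps * C <= 1 / 2.
Proof.
  intros Hd HC; exists (delta / (2 * (1 + delta * C))).
  assert (Hpos : 0 < 1 + delta * C) by nra.
  repeat split.
  - apply Rdiv_lt_0_compat; lra.
  - apply Rmult_lt_reg_r with (2 * (1 + delta * C)); [lra|].
    field_simplify; nra.
  - apply Rmult_le_reg_r with (2 * (1 + delta * C)); [lra|].
    field_simplify; nra.
Qed.

Section Uniqueness.

Variables (V : R -> R) (lam : R) (b b1 : R -> R).
Hypothesis Hsol : real_solution V lam b b1.

Lemma abs_b1_increment_le (l r a s m : R) :
  (forall x, l < x < r -> continuous V x) -> l < a <= s -> s < r ->
  (forall x, a <= x <= s -> Rabs (b x) <= m) ->
  Rabs (b1 s - b1 a) <= m * (RInt (fun u => Rabs (V u)) a s + Rabs lam * (s - a)).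
Proof.
  intros HV Ha Hs Hb.
  destruct (real_solution_ode Hsol a s) as [D HD].
  set (g := fun y => m * (RInt (fun u => Rabs (V u)) a y + Rabs lam * (y - a))).
  assert (Hg : forall x, a <= x <= s -> is_derive g x (m * (Rabs (V x) + Rabs lam))).
  { intros x Hx; apply is_derive_scal.
    apply (is_derive_plus (fun y => RInt (fun u => Rabs (V u)) a y) (fun y => Rabs lam * (y - a))).
    - apply (is_derive_RInt_on (fun u => Rabs (V u)) l r); [|lra|lra].
      intros y Hy; apply continuous_Rabs_comp, HV, Hy.
    - auto_derive; [auto | ring]. }
  assert (Hga : g a = 0) by (unfold g; rewrite RInt_point, Rminus_eq_0; unfold zero; simpl; ring).
  replace (m * _) with (g s - g a) by (rewrite Hga; unfold g; ring).
  apply (abs_increment_le_except b1 g D a s); [lra | |].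
  - intros x Hx; split; [apply (real_solution_continuous Hsol)|].
    eapply continuous_of_is_derive; apply Hg, Hx.
  - intros x Hx Hn; exists ((V x - lam) * b x), (m * (Rabs (V x) + Rabs lam)).
    split; [apply HD; auto; lra | split; [apply Hg; lra|]].
    rewrite Rabs_mult, Rmult_comm.
    apply Rmult_le_compat; try apply Rabs_pos; [apply Hb; lra|].
    unfold Rminus; rewrite <- (Rabs_Ropp lam); apply Rabs_triang.
Qed.

Lemma abs_b1_le_near_right (z : R) : right_integrable V z -> b1 z = 0 ->
  exists eps C, 0 < eps /\ 0 <= C /\ eps * C <= 1 / 2 /\
    forall m, (forall r, z <= r <= z + eps -> Rabs (b r) <= m) ->
    forall s, z <= s <= z + eps -> Rabs (b1 s) <= C * m.
Proof.
  intros [delta [L [Hdelta [HV HL]]]] Hz.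
  assert (HL0 : 0 <= L).
  { specialize (HL (z + delta / 2) (z + delta / 2) ltac:(lra) ltac:(lra)).
    rewrite RInt_point in HL; exact HL. }
  set (C := L + Rabs lam * delta).
  assert (HC : 0 <= C) by (pose proof (Rabs_pos lam); unfold C; nra).
  destruct (exists_small_step delta C Hdelta HC) as [eps [Heps HeC]].
  exists eps, C; split; [lra | split; [exact HC | split; [exact HeC|]]].
  intros m Hm s Hs.
  assert (Hm0 : 0 <= m) by (apply Rle_trans with (Rabs (b z)); [apply Rabs_pos | apply Hm; lra]).
  destruct (Req_dec s z) as [->|Hsz]; [rewrite Hz, Rabs_R0; nra|].
  (* Increments of b1 are controlled away from z; continuity of b1 at z finishes. *)
  assert (Hinc : forall t, z < t <= s -> Rabs (b1 s) <= Rabs (b1 t) + C * m).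
  { intros t Ht.
    assert (H := abs_b1_increment_le z (z + delta) t s m HV ltac:(lra) ltac:(lra)
                   ltac:(intros; apply Hm; lra)).
    assert (m * RInt (fun u => Rabs (V u)) t s <= m * L)
      by (apply Rmult_le_compat_l; [lra | apply HL; lra]).
    assert (m * (Rabs lam * (s - t)) <= m * (Rabs lam * delta))
      by (apply Rmult_le_compat_l, Rmult_le_compat_l; [lra | apply Rabs_pos | lra]).
    pose proof (Rabs_triang_inv (b1 s) (b1 t)).
    unfold C; lra. }
  enough (0 <= Rabs (b1 z) + C * m - Rabs (b1 s)) by (rewrite Hz, Rabs_R0 in *; lra).
  apply (nonneg_of_continuous_approx (fun t => Rabs (b1 t) + C * m - Rabs (b1 s))).
  - apply (continuous_minus (fun t => Rabs (b1 t) + C * m) (fun _ => Rabs (b1 s))).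
    + apply (continuous_plus (fun t => Rabs (b1 t)) (fun _ => C * m));
        [apply continuous_Rabs_comp, (real_solution_continuous Hsol) | apply continuous_const].
    + apply continuous_const.
  - intros d Hd; exists (z + Rmin (d / 2) (s - z)).
    assert (0 < Rmin (d / 2) (s - z)) by (apply Rmin_glb_lt; lra).
    pose proof (Rmin_l (d / 2) (s - z)); pose proof (Rmin_r (d / 2) (s - z)).
    split; [rewrite Rabs_right; lra|].
    specialize (Hinc (z + Rmin (d / 2) (s - z)) ltac:(lra)); lra.
Qed.

Lemma vanish_near_right (z : R) : right_integrable V z -> b z = 0 -> b1 z = 0 ->
  exists eps, 0 < eps /\ forall s, z <= s <= z + eps -> b s = 0 /\ b1 s = 0.
Proof.
  intros Hint Hz Hz1.
  destruct (abs_b1_le_near_right z Hint Hz1) as [eps [C [Heps [HC [HeC Hbound]]]]].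
  assert (Hbc : forall x, continuous b x)
    by (intro x; eapply continuous_of_is_derive; apply (real_solution_derive Hsol)).
  destruct (continuity_ab_maj (fun r => Rabs (b r)) z (z + eps)) as [xm [Hmax Hxm]]; [lra| |].
  { intros c _; apply continuity_pt_filterlim, continuous_Rabs_comp, Hbc. }
  set (m := Rabs (b xm)).
  assert (Hm0 : 0 <= m) by apply Rabs_pos.
  assert (Hb1 : forall s, z <= s <= z + eps -> Rabs (b1 s) <= C * m) by (apply Hbound, Hmax).
  assert (Hb : forall s, z <= s <= z + eps -> Rabs (b s) <= C * m * eps).
  { intros s Hs.
    assert (H : Rabs (b s - b z) <= C * m * s - C * m * z).
    { apply (abs_increment_le_except b (fun r => C * m * r) nil z s); [lra | |].
      - intros x _; split; [apply Hbc|].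
        apply (continuous_of_is_derive _ _ (C * m)); auto_derive; [auto | ring].
      - intros x Hx _; exists (b1 x), (C * m); split; [apply (real_solution_derive Hsol)|].
        split; [auto_derive; [auto | ring] | apply Hb1; lra]. }
    assert (C * m * (s - z) <= C * m * eps)
      by (apply Rmult_le_compat_l; [apply Rmult_le_pos | ]; lra).
    rewrite Hz, Rminus_0_r in H; lra. }
  (* m = max |b| on [z, z + eps] satisfies m <= C m eps <= m / 2. *)
  assert (Hm : m = 0) by (assert (m <= C * m * eps) by (apply Hb; exact Hxm); nra).
  exists eps; split; [exact Heps|]; intros s Hs; split.
  - specialize (Hb s Hs); rewrite Hm in Hb.
    destruct (Req_dec (b s) 0) as [|E]; [auto | pose proof (Rabs_pos_lt _ E); nra].
  - specialize (Hb1 s Hs); rewrite Hm in Hb1.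
    destruct (Req_dec (b1 s) 0) as [|E]; [auto | pose proof (Rabs_pos_lt _ E); nra].
Qed.

End Uniqueness.

Lemma real_solution_vanish_right (V : R -> R) (lam : R) (b b1 : R -> R) (z : R) :
  PC0 (fun x => RtoC (V x)) -> real_solution V lam b b1 -> b z = 0 -> b1 z = 0 ->
  forall T, z <= T -> b T = 0.
Proof.
  intros HV Hsol Hz Hz1 T HT.
  apply (right_induction (fun t => b t = 0 /\ b1 t = 0) z); auto.
  - intros m Hzm Hbelow; split.
    + apply (eq_0_of_continuous_left b z m Hzm); [|intros; apply Hbelow; auto].
      eapply continuous_of_is_derive; apply (real_solution_derive Hsol).
    + apply (eq_0_of_continuous_left b1 z m Hzm); [apply (real_solution_continuous Hsol)|].
      intros; apply Hbelow; auto.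
  - intros x _ [Hx Hx1]; apply (vanish_near_right V lam b b1 Hsol x); auto.
    apply PC0_right_integrable, HV.
Qed.

(** * Bloch pairs *)

Lemma bloch_iter (h : R -> R) (gam mu : R) :
  (forall x, h (x + gam) = mu * h x) -> forall n x, h (x + INR n * gam) = mu ^ n * h x.
Proof.
  intros Hshift n; induction n as [|n IH]; intro x.
  - simpl; rewrite Rmult_0_l, Rplus_0_r; ring.
  - rewrite S_INR; replace (x + (INR n + 1) * gam) with (x + INR n * gam + gam) by ring.
    rewrite Hshift, IH; simpl; ring.
Qed.

Lemma exists_shift_above (gam x x0 : R) : 0 < gam -> exists n : nat, x0 <= x + INR n * gam.
Proof.
  intro Hgam; destruct (INR_archimed gam (x0 - x)) as [n Hn]; [lra|].
  exists n; lra.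
Qed.

Lemma eq_0_of_geometric_bound (r a B : R) :
  0 <= r < 1 -> (forall n, Rabs a <= r ^ n * B) -> a = 0.
Proof.
  intros Hr Hbound; destruct (Req_dec a 0) as [|Ha]; auto; exfalso.
  assert (Hpos : 0 < Rabs a) by (apply Rabs_pos_lt, Ha).
  assert (HB : 0 <= B) by (specialize (Hbound O); simpl in Hbound; lra).
  destruct (pow_lt_1_zero r ltac:(rewrite Rabs_right; lra) (Rabs a / (B + 1)))
    as [N HN]; [apply Rdiv_lt_0_compat; lra|].
  specialize (HN N (le_n N)); rewrite Rabs_right in HN by (apply Rle_ge, pow_le; lra).
  specialize (Hbound N).
  assert (r ^ N * B <= r ^ N * (B + 1)) by (apply Rmult_le_compat_l; [apply pow_le|]; lra).
  assert (r ^ N * (B + 1) < Rabs a / (B + 1) * (B + 1)) by (apply Rmult_lt_compat_r; lra).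
  replace (Rabs a / (B + 1) * (B + 1)) with (Rabs a) in * by (field; lra).
  lra.
Qed.

(* Iterate the shift backwards if rho < 1 and forwards if rho > 1. *)
Lemma bloch_factor_eq_1 (h : R -> R) (gam rho M y : R) :
  0 <= rho -> (forall x, h (x + gam) = rho * h x) -> (forall x, Rabs (h x) <= M) ->
  h y <> 0 -> rho = 1.
Proof.
  intros Hrho Hshift HM Hy.
  assert (Hit := bloch_iter h gam rho Hshift).
  destruct (Rtotal_order rho 1) as [Hlt|[Heq|Hgt]]; auto; exfalso; apply Hy.
  - apply (eq_0_of_geometric_bound rho (h y) M); [lra|]; intro n.
    replace y with (y - INR n * gam + INR n * gam) at 1 by ring.
    rewrite Hit, Rabs_mult, (Rabs_right (rho ^ n)) by (apply Rle_ge, pow_le; lra).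
    apply Rmult_le_compat_l; [apply pow_le; lra | apply HM].
  - assert (Hinv : 0 <= / rho < 1) by (split; [left; apply Rinv_0_lt_compat |
      rewrite <- Rinv_1; apply Rinv_lt_contravar]; lra).
    apply (eq_0_of_geometric_bound (/ rho) (h y) M Hinv); intro n.
    assert (Hn : 0 < rho ^ n) by (apply pow_lt; lra).
    replace (Rabs (h y)) with (/ rho ^ n * Rabs (h (y + INR n * gam))).
    + rewrite pow_inv; apply Rmult_le_compat_l; [left; apply Rinv_0_lt_compat, Hn | apply HM].
    + rewrite Hit, Rabs_mult, Rabs_right by lra; field; lra.
Qed.

Lemma real_solution_lincomb (V : R -> R) (lam al be : R) (u v u1 v1 : R -> R) :
  real_solution V lam u u1 -> real_solution V lam v v1 ->
  real_solution V lam (fun x => al * u x + be * v x) (fun x => al * u1 x + be * v1 x).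
Proof.
  intros Hu Hv; split.
  - intro x; apply (is_derive_plus (fun x => al * u x) (fun x => be * v x));
      apply is_derive_scal; [apply (real_solution_derive Hu) | apply (real_solution_derive Hv)].
  - intro x; apply (continuous_plus (fun x => al * u1 x) (fun x => be * v1 x));
      [apply (continuous_scal_r al u1), (real_solution_continuous Hu)
      | apply (continuous_scal_r be v1), (real_solution_continuous Hv)].
  - intros a c; destruct (real_solution_ode Hu a c) as [Du HDu];
      destruct (real_solution_ode Hv a c) as [Dv HDv].
    exists (Du ++ Dv); intros x Hx Hn; rewrite in_app_iff in Hn.
    replace ((V x - lam) * (al * u x + be * v x))
      with (al * ((V x - lam) * u x) + be * ((V x - lam) * v x)) by ring.
    apply (is_derive_plus (fun x => al * u1 x) (fun x => be * v1 x));
      apply is_derive_scal; [apply HDu | apply HDv]; tauto.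
Qed.

Section BlochPair.

(* (u, v) = (Re psi, Im psi) for a Bloch solution psi with multiplier m1 + i m2. *)

Variables (V : R -> R) (lam gam m1 m2 M : R) (u v u1 v1 : R -> R).
Hypotheses (HV : PC0 (fun x => RtoC (V x))) (Hgam : 0 < gam)
  (Hu : real_solution V lam u u1) (Hv : real_solution V lam v v1)
  (Hshift_u : forall x, u (x + gam) = m1 * u x - m2 * v x)
  (Hshift_v : forall x, v (x + gam) = m1 * v x + m2 * u x)
  (Hbounded : forall x, u x ^ 2 + v x ^ 2 <= M)
  (Hnonzero : exists x, u x ^ 2 + v x ^ 2 <> 0).

Lemma lincomb_vanish_right (al be z : R) :
  al * u z + be * v z = 0 -> al * u1 z + be * v1 z = 0 ->
  forall T, z <= T -> al * u T + be * v T = 0.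
Proof.
  apply (real_solution_vanish_right V lam (fun x => al * u x + be * v x)
           (fun x => al * u1 x + be * v1 x) z HV).
  apply real_solution_lincomb; auto.
Qed.

Lemma modulus_shift (x : R) :
  u (x + gam) ^ 2 + v (x + gam) ^ 2 = (m1 ^ 2 + m2 ^ 2) * (u x ^ 2 + v x ^ 2).
Proof. rewrite Hshift_u, Hshift_v; ring. Qed.

Lemma multiplier_unimodular : m1 ^ 2 + m2 ^ 2 = 1.
Proof.
  destruct Hnonzero as [y Hy].
  apply (bloch_factor_eq_1 (fun x => u x ^ 2 + v x ^ 2) gam _ M y); auto.
  - pose proof (pow2_ge_0 m1); pose proof (pow2_ge_0 m2); lra.
  - exact modulus_shift.
  - intro x; rewrite Rabs_right; [apply Hbounded|].
    pose proof (pow2_ge_0 (u x)); pose proof (pow2_ge_0 (v x)); lra.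
Qed.

Lemma nonzero_right (x0 : R) : exists y, x0 <= y /\ u y ^ 2 + v y ^ 2 <> 0.
Proof.
  destruct Hnonzero as [x Hx]; destruct (exists_shift_above gam x x0 Hgam) as [n Hn].
  exists (x + INR n * gam); split; auto.
  rewrite (bloch_iter (fun x => u x ^ 2 + v x ^ 2) gam 1); [rewrite pow1; lra|].
  intro y; rewrite modulus_shift, multiplier_unimodular; ring.
Qed.

Lemma collinear_right (x0 : R) : u x0 = 0 -> v x0 = 0 ->
  exists c1 c2, c1 ^ 2 + c2 ^ 2 <> 0 /\ forall T, x0 <= T -> c1 * v T - c2 * u T = 0.
Proof.
  intros Hu0 Hv0; exists (u1 x0), (v1 x0); split.
  - intro Hc; destruct (nonzero_right x0) as [y [Hy Hqy]]; apply Hqy.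
    assert (u1 x0 = 0 /\ v1 x0 = 0) as [Hu1 Hv1] by (split; nra).
    assert (Huy : 1 * u y + 0 * v y = 0)
      by (apply (lincomb_vanish_right 1 0 x0); auto; [rewrite Hu0, Hv0 | rewrite Hu1, Hv1]; ring).
    assert (Hvy : 0 * u y + 1 * v y = 0)
      by (apply (lincomb_vanish_right 0 1 x0); auto; [rewrite Hu0, Hv0 | rewrite Hu1, Hv1]; ring).
    replace (u y) with 0 by lra; replace (v y) with 0 by lra; ring.
  - intros T HT; replace (u1 x0 * v T - v1 x0 * u T) with (- v1 x0 * u T + u1 x0 * v T) by ring.
    apply (lincomb_vanish_right _ _ x0); auto; [rewrite Hu0, Hv0 |]; ring.
Qed.

Lemma multiplier_real (x0 : R) : u x0 = 0 -> v x0 = 0 -> m2 = 0.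
Proof.
  intros Hu0 Hv0; destruct (collinear_right x0 Hu0 Hv0) as [c1 [c2 [Hc Hline]]].
  destruct (nonzero_right x0) as [y [Hy Hqy]].
  assert (Hproj : c1 * u y + c2 * v y <> 0).
  { intro E; apply Hqy; assert (E' := Hline y Hy).
    assert (Hu' : (c1 ^ 2 + c2 ^ 2) * u y = 0)
      by (replace ((c1 ^ 2 + c2 ^ 2) * u y)
            with (c1 * (c1 * u y + c2 * v y) - c2 * (c1 * v y - c2 * u y)) by ring;
          rewrite E, E'; ring).
    assert (Hv' : (c1 ^ 2 + c2 ^ 2) * v y = 0)
      by (replace ((c1 ^ 2 + c2 ^ 2) * v y)
            with (c2 * (c1 * u y + c2 * v y) + c1 * (c1 * v y - c2 * u y)) by ring;
          rewrite E, E'; ring).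
    destruct (Rmult_integral _ _ Hu') as [| ->]; [contradiction|].
    destruct (Rmult_integral _ _ Hv') as [| ->]; [contradiction | ring]. }
  assert (Hstep : c1 * v (y + gam) - c2 * u (y + gam)
                  = m1 * (c1 * v y - c2 * u y) + m2 * (c1 * u y + c2 * v y))
    by (rewrite Hshift_u, Hshift_v; ring).
  rewrite (Hline y Hy), (Hline (y + gam)) in Hstep by lra.
  destruct (Rmult_integral m2 (c1 * u y + c2 * v y)) as [|E]; [lra | auto | contradiction].
Qed.

Lemma bloch_pair_real_multiple (x0 : R) : u x0 = 0 -> v x0 = 0 ->
  exists c1 c2 f, (forall x, u x = c1 * f x /\ v x = c2 * f x) /\
    (forall x, f (x + gam) = m1 * f x).
Proof.
  intros Hu0 Hv0; assert (Hm2 := multiplier_real x0 Hu0 Hv0).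
  destruct (collinear_right x0 Hu0 Hv0) as [c1 [c2 [Hc Hline]]].
  assert (Hm1 : m1 <> 0)
    by (intro E; assert (H := multiplier_unimodular); rewrite E, Hm2 in H; lra).
  assert (Hline_all : forall x, c1 * v x - c2 * u x = 0).
  { intro x; destruct (exists_shift_above gam x x0 Hgam) as [n Hn].
    assert (Hit := bloch_iter (fun x => c1 * v x - c2 * u x) gam m1
                     ltac:(intro t; cbv beta; rewrite Hshift_u, Hshift_v, Hm2; ring) n x).
    cbv beta in Hit; rewrite (Hline _ Hn) in Hit.
    destruct (Rmult_integral _ _ (eq_sym Hit)) as [E|]; auto.
    contradiction (pow_nonzero m1 n Hm1). }
  exists c1, c2, (fun x => (c1 * u x + c2 * v x) / (c1 ^ 2 + c2 ^ 2)); split.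
  - intro x; assert (E := Hline_all x).
    assert (Eu : c1 * (c1 * u x + c2 * v x) - (c1 ^ 2 + c2 ^ 2) * u x
                 = c2 * (c1 * v x - c2 * u x)) by ring.
    assert (Ev : c2 * (c1 * u x + c2 * v x) - (c1 ^ 2 + c2 ^ 2) * v x
                 = - c1 * (c1 * v x - c2 * u x)) by ring.
    rewrite E, Rmult_0_r in Eu, Ev; unfold Rdiv; rewrite <- !Rmult_assoc.
    split; [replace (c1 * (c1 * u x + c2 * v x)) with ((c1 ^ 2 + c2 ^ 2) * u x) by lra
           | replace (c2 * (c1 * u x + c2 * v x)) with ((c1 ^ 2 + c2 ^ 2) * v x) by lra];
      field; auto.
  - intro x; rewrite Hshift_u, Hshift_v, Hm2; field; auto.
Qed.

End BlochPair.

(** * Complex Bloch solutions *)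

Definition C1 (f : R -> R) : Prop :=
  exists df, (forall x, is_derive f x (df x)) /\ (forall x, continuous df x).

Lemma C1_ext (f g : R -> R) : (forall x, f x = g x) -> C1 f -> C1 g.
Proof.
  intros Hfg [df [Hdf Hc]]; exists df; split; auto.
  intro x; apply (is_derive_ext f g); auto.
Qed.

Lemma C1_of_derive (f df : R -> R) :
  (forall x, is_derive f x (df x)) -> (forall x, ex_derive df x) -> C1 f.
Proof.
  intros Hf Hdf; exists df; split; auto.
  intro x; destruct (Hdf x) as [l Hl]; apply (continuous_of_is_derive df x l Hl).
Qed.

Lemma C1_plus (f g : R -> R) : C1 f -> C1 g -> C1 (fun x => f x + g x).
Proof.
  intros [df [Hf Hfc]] [dg [Hg Hgc]]; exists (fun x => df x + dg x); split.
  - intro x; apply (is_derive_plus f g); auto.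
  - intro x; apply (continuous_plus df dg); auto.
Qed.

Lemma C1_minus (f g : R -> R) : C1 f -> C1 g -> C1 (fun x => f x - g x).
Proof.
  intros [df [Hf Hfc]] [dg [Hg Hgc]]; exists (fun x => df x - dg x); split.
  - intro x; apply (is_derive_minus f g); auto.
  - intro x; apply (continuous_minus df dg); auto.
Qed.

Lemma C1_mult (f g : R -> R) : C1 f -> C1 g -> C1 (fun x => f x * g x).
Proof.
  intros [df [Hf Hfc]] [dg [Hg Hgc]]; exists (fun x => df x * g x + f x * dg x); split.
  - intro x; apply (is_derive_mult f g x (df x) (dg x)); auto; intros; apply Rmult_comm.
  - intro x; apply (continuous_plus (fun x => df x * g x) (fun x => f x * dg x));
      apply (continuous_mult (K := R_AbsRing)); auto;
      eapply continuous_of_is_derive; [apply Hg | apply Hf].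
Qed.

Lemma continuous_of_C1_derive (f l : R -> R) :
  C1 f -> (forall x, is_derive f x (l x)) -> forall x, continuous l x.
Proof.
  intros [df [Hdf Hc]] Hl x; apply (continuous_ext df).
  - intro y; rewrite <- (is_derive_unique _ _ _ (Hdf y)); apply is_derive_unique, Hl.
  - apply Hc.
Qed.

Lemma C1_exp_cos (a b : R) : C1 (fun t => exp (a * t) * cos (b * t)).
Proof.
  apply (C1_of_derive _ (fun t => a * exp (a * t) * cos (b * t) - b * exp (a * t) * sin (b * t)));
    intro x; [auto_derive; [auto | ring] | auto_derive; auto].
Qed.

Lemma C1_exp_sin (a b : R) : C1 (fun t => exp (a * t) * sin (b * t)).
Proof.
  apply (C1_of_derive _ (fun t => a * exp (a * t) * sin (b * t) + b * exp (a * t) * cos (b * t)));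
    intro x; [auto_derive; [auto | ring] | auto_derive; auto].
Qed.

Lemma PC2_C1 (p : R -> C) : PC 2 p -> C1 (fun x => Re (p x)) /\ C1 (fun x => Im (p x)).
Proof.
  intros [Hpc [g [[Hgc _] Hpg]]]; split.
  - exists (fun x => Re (g x)); split; [|intro x; apply continuous_Re, Hgc].
    apply is_derive_of_except; [intro; apply continuous_Re, Hpc | intro; apply continuous_Re, Hgc|].
    intros a c; destruct (Hpg a c) as [D HD]; exists D; intros; apply is_derive_Re, HD; auto.
  - exists (fun x => Im (g x)); split; [|intro x; apply continuous_Im, Hgc].
    apply is_derive_of_except; [intro; apply continuous_Im, Hpc | intro; apply continuous_Im, Hgc|].
    intros a c; destruct (Hpg a c) as [D HD]; exists D; intros; apply is_derive_Im, HD; auto.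
Qed.

Lemma cexp_add (a b : C) : cexp (a + b) = (cexp a * cexp b)%C.
Proof.
  unfold cexp, Re, Im; simpl; rewrite exp_plus, cos_plus, sin_plus.
  apply injective_projections; simpl; ring.
Qed.

Lemma cexp_Ci_mult (k : C) (x : R) :
  cexp (Ci * k * RtoC x) =
  (exp (- Im k * x) * cos (Re k * x), exp (- Im k * x) * sin (Re k * x)).
Proof.
  destruct k as [k1 k2]; unfold cexp, Re, Im; simpl.
  replace ((0 * k1 - 1 * k2) * x - (0 * k2 + 1 * k1) * 0) with (- k2 * x) by ring.
  replace ((0 * k1 - 1 * k2) * 0 + (0 * k2 + 1 * k1) * x) with (k1 * x) by ring.
  reflexivity.
Qed.

Lemma bloch_parts_C1 (k : C) (p psi : R -> C) :
  PC 2 p -> (forall x, psi x = (cexp (Ci * k * RtoC x) * p x)%C) ->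
  C1 (fun x => Re (psi x)) /\ C1 (fun x => Im (psi x)).
Proof.
  intros Hp Hpsi; destruct (PC2_C1 p Hp) as [HRe HIm].
  assert (Hcos := C1_exp_cos (- Im k) (Re k)); assert (Hsin := C1_exp_sin (- Im k) (Re k)).
  split.
  - apply (C1_ext (fun x => exp (- Im k * x) * cos (Re k * x) * Re (p x)
                           - exp (- Im k * x) * sin (Re k * x) * Im (p x))).
    + intro x; rewrite Hpsi, cexp_Ci_mult; reflexivity.
    + apply C1_minus; apply C1_mult; auto.
  - apply (C1_ext (fun x => exp (- Im k * x) * cos (Re k * x) * Im (p x)
                           + exp (- Im k * x) * sin (Re k * x) * Re (p x))).
    + intro x; rewrite Hpsi, cexp_Ci_mult; reflexivity.
    + apply C1_plus; apply C1_mult; auto.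
Qed.

Lemma is_solution_real_parts (V : R -> R) (lam : R) (psi : R -> C) :
  is_solution V lam psi -> C1 (fun x => Re (psi x)) -> C1 (fun x => Im (psi x)) ->
  exists u1 v1, real_solution V lam (fun x => Re (psi x)) u1 /\
                real_solution V lam (fun x => Im (psi x)) v1.
Proof.
  intros [psi1 [Hd1 Hd2]] HRe HIm.
  exists (fun x => Re (psi1 x)), (fun x => Im (psi1 x)); split; split.
  - intro x; apply is_derive_Re, Hd1.
  - apply (continuous_of_C1_derive _ _ HRe); intro x; apply is_derive_Re, Hd1.
  - intros a c; destruct (Hd2 a c) as [D HD]; exists D; intros x Hx Hn.
    destruct (HD x Hx Hn) as [psi2 [H2 Heq]].
    replace ((V x - lam) * Re (psi x)) with (Re psi2)
      by (apply (f_equal Re) in Heq; unfold Re in *; simpl in *; lra).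
    apply is_derive_Re, H2.
  - intro x; apply is_derive_Im, Hd1.
  - apply (continuous_of_C1_derive _ _ HIm); intro x; apply is_derive_Im, Hd1.
  - intros a c; destruct (Hd2 a c) as [D HD]; exists D; intros x Hx Hn.
    destruct (HD x Hx Hn) as [psi2 [H2 Heq]].
    replace ((V x - lam) * Im (psi x)) with (Im psi2)
      by (apply (f_equal Im) in Heq; unfold Im in *; simpl in *; lra).
    apply is_derive_Im, H2.
Qed.

Lemma bloch_shift (gam : R) (k : C) (p psi : R -> C) :
  periodic gam p -> (forall x, psi x = (cexp (Ci * k * RtoC x) * p x)%C) ->
  forall x, psi (x + gam) = (cexp (Ci * k * RtoC gam) * psi x)%C.
Proof.
  intros Hp Hpsi x; rewrite !Hpsi, Hp, RtoC_plus.
  replace (Ci * k * (RtoC x + RtoC gam))%C with (Ci * k * RtoC x + Ci * k * RtoC gam)%C by ring.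
  rewrite cexp_add; ring.
Qed.

Lemma quasimomentum_of_real_multiplier (gam : R) (k : C) :
  0 < gam ->
  Re (cexp (Ci * k * RtoC gam)) ^ 2 + Im (cexp (Ci * k * RtoC gam)) ^ 2 = 1 ->
  Im (cexp (Ci * k * RtoC gam)) = 0 ->
  exists n : Z, k = RtoC (IZR n * PI / gam).
Proof.
  destruct k as [k1 k2]; rewrite cexp_Ci_mult; unfold Re, Im; simpl.
  intros Hgam Hmod Hsin.
  assert (Hexp : exp (- k2 * gam) = 1).
  { assert (Hpos := exp_pos (- k2 * gam)); assert (Htrig := sin2_cos2 (k1 * gam)).
    unfold Rsqr in Htrig.
    assert (Hsq : exp (- k2 * gam) ^ 2 * (sin (k1 * gam) * sin (k1 * gam)
                                        + cos (k1 * gam) * cos (k1 * gam)) = 1)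
      by (rewrite <- Hmod; ring).
    rewrite Htrig in Hsq.
    nra. }
  assert (Hk2 : k2 = 0).
  { rewrite <- exp_0 in Hexp; apply exp_inv in Hexp.
    apply (Rmult_eq_reg_r gam); lra. }
  rewrite Hexp, Rmult_1_l in Hsin; destruct (sin_eq_0_0 _ Hsin) as [n Hn].
  exists n; apply injective_projections; simpl.
  - rewrite <- Hn; field; apply Rgt_not_eq, Hgam.
  - exact Hk2.
Qed.

Lemma Cmod_sqr (z : C) : Cmod z ^ 2 = Re z ^ 2 + Im z ^ 2.
Proof.
  unfold Cmod, Re, Im; apply pow2_sqrt.
  pose proof (pow2_ge_0 (fst z)); pose proof (pow2_ge_0 (snd z)); lra.
Qed.

Lemma bloch_solution_real_multiple (V : R -> R) (lam gam M : R) (mu : C) (psi : R -> C) :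
  0 < gam -> PC0 (fun x => RtoC (V x)) ->
  (exists u1 v1, real_solution V lam (fun x => Re (psi x)) u1 /\
                 real_solution V lam (fun x => Im (psi x)) v1) ->
  (forall x, psi (x + gam) = (mu * psi x)%C) ->
  (forall x, Cmod (psi x) <= M) -> (exists x, psi x <> RtoC 0) -> (exists x0, psi x0 = RtoC 0) ->
  Re mu ^ 2 + Im mu ^ 2 = 1 /\ Im mu = 0 /\
  exists (c : C) (f : R -> R), (forall x, psi x = (c * RtoC (f x))%C) /\
    (forall x, f (x + gam) = Re mu * f x).
Proof.
  intros Hgam HV [u1 [v1 [Hu Hv]]] Hshift HM [xn Hxn] [x0 Hx0].
  assert (Hshift_u : forall x, Re (psi (x + gam)) = Re mu * Re (psi x) - Im mu * Im (psi x))
    by (intro x; rewrite Hshift; reflexivity).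
  assert (Hshift_v : forall x, Im (psi (x + gam)) = Re mu * Im (psi x) + Im mu * Re (psi x))
    by (intro x; rewrite Hshift; unfold Re, Im; simpl; ring).
  assert (Hbounded : forall x, Re (psi x) ^ 2 + Im (psi x) ^ 2 <= M ^ 2)
    by (intro x; rewrite <- Cmod_sqr; apply pow_incr; split; [apply Cmod_ge_0 | apply HM]).
  assert (Hnonzero : exists x, Re (psi x) ^ 2 + Im (psi x) ^ 2 <> 0).
  { exists xn; rewrite <- Cmod_sqr; apply pow_nonzero; intro E; apply Hxn, Cmod_eq_0, E. }
  assert (Hu0 : Re (psi x0) = 0) by (rewrite Hx0; reflexivity).
  assert (Hv0 : Im (psi x0) = 0) by (rewrite Hx0; reflexivity).
  split; [exact (multiplier_unimodular gam _ _ (M ^ 2) _ _ Hshift_u Hshift_v Hbounded Hnonzero)|].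
  split; [exact (multiplier_real V lam gam _ _ (M ^ 2) _ _ u1 v1 HV Hgam Hu Hv
                   Hshift_u Hshift_v Hbounded Hnonzero x0 Hu0 Hv0)|].
  destruct (bloch_pair_real_multiple V lam gam (Re mu) (Im mu) (M ^ 2) _ _ u1 v1 HV Hgam Hu Hv
              Hshift_u Hshift_v Hbounded Hnonzero x0 Hu0 Hv0) as [c1 [c2 [f [Hrep Hf]]]].
  exists (c1, c2), f; split; auto.
  intro x; destruct (Hrep x) as [E1 E2]; unfold Re, Im in E1, E2.
  apply injective_projections; simpl; rewrite ?E1, ?E2; ring.
Qed.

Theorem theoremA12 (gamma : R) (V : R -> R) (lambda : R) (k : C) (p : R -> C)
    (psi : R -> C) :
  0 < gamma ->
  PC0 (fun x => RtoC (V x)) -> periodic gamma V ->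
  PCper 2 gamma p ->
  (forall x, psi x = (cexp (Ci * k * RtoC x) * p x)%C) ->
  (exists x, psi x <> RtoC 0) ->
  is_solution V lambda psi ->
  (exists M : R, forall x, Cmod (psi x) <= M) ->
  (exists x0, psi x0 = RtoC 0) ->
  (exists n : Z, k = RtoC (IZR n * PI / gamma)) /\
  exists (c : C) (f : R -> R),
    (forall x, psi x = (c * RtoC (f x))%C) /\
    ((forall x, f (x + gamma) = f x) \/ (forall x, f (x + gamma) = - f x)).
Proof.
  intros Hgam HV _ [Hp Hper] Hpsi Hnonzero Hsol [M HM] Hzero.
  destruct (bloch_parts_C1 k p psi Hp Hpsi) as [HRe HIm].
  destruct (bloch_solution_real_multiple V lambda gamma M (cexp (Ci * k * RtoC gamma)) psi
              Hgam HV (is_solution_real_parts V lambda psi Hsol HRe HIm)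
              (bloch_shift gamma k p psi Hper Hpsi) HM Hnonzero Hzero)
    as [Hmod [Hreal [c [f [Hrep Hf]]]]].
  split; [apply quasimomentum_of_real_multiplier; auto|].
  exists c, f; split; auto.
  rewrite Hreal in Hmod.
  assert (Hsign : Re (cexp (Ci * k * RtoC gamma)) = 1 \/ Re (cexp (Ci * k * RtoC gamma)) = -1)
    by (destruct (Rle_dec 0 (Re (cexp (Ci * k * RtoC gamma)))); [left | right]; nra).
  destruct Hsign as [E|E]; [left | right]; intro x; rewrite Hf, E; ring.
Qed.
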